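(* Let $k \ge 1$ and let $P_{2k}$ be the uniform distribution on $2k$ equally spaced points of the unit circle $\mathbb{S}^1$, equipped with the arc length distance $d$. Then for each of these $2k$ points $x$, $D(x; P_{2k}) = -1 + \frac{1}{k} - \frac{1}{4 k^2} + \sum_{j = 1}^{k} \frac{1}{j^2}$.
   Context: Define $h: \mathcal{X}^3 \to \mathbb{R}$ by $h(x_1, x_2, x_3) := \mathbb{I}( x_3 \notin \{x_1, x_2\} ) \dfrac{ d^2(x_1, x_3) + d^2(x_2, x_3) - d^2(x_1, x_2) }{d(x_1, x_3)\, d(x_2, x_3) }$, where $h := 0$ when $x_3 \in \{x_1,x_2\}$. The metric spatial depth of $\mu \in \mathcal{X}$ with respect to a probability distribution $P_X$ on $\mathcal{X}$ is $D(\mu; P_X) := 1 - \frac{1}{2} \mathrm{E} \{ h(X_1, X_2, \mu) \}$, where $X_1, X_2 \sim P_X$ are independent. *)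

From Stdlib Require Import Reals Lra List.
Import ListNotations.
Open Scope R_scope.

(* The unit circle S^1, represented as points of R^2 (only unit vectors are used). *)
Definition S1 : Type := (R * R)%type.

Definition S1_eq_dec (u v : S1) : {u = v} + {u <> v}.
Proof.
  destruct u as [a b], v as [c e].
  destruct (Req_EM_T a c) as [H1|H1]; destruct (Req_EM_T b e) as [H2|H2];
    [left; subst; reflexivity | right; intro H; inversion H; contradiction ..].
Defined.

(* Arc length (geodesic) distance on the unit circle: angle between unit vectors. *)
Definition arc_dist (u v : S1) : R := acos (fst u * fst v + snd u * snd v).

Definition h_ker (d : S1 -> S1 -> R) (x1 x2 x3 : S1) : R :=
  if S1_eq_dec x3 x1 then 0
  else if S1_eq_dec x3 x2 then 0
  else (d x1 x3 ^ 2 + d x2 x3 ^ 2 - d x1 x2 ^ 2) / (d x1 x3 * d x2 x3).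

Definition lsum {A : Type} (f : A -> R) (l : list A) : R :=
  fold_right (fun a acc => f a + acc) 0 l.

(* E{ h(X1,X2,mu) } with X1, X2 independent, each uniformly distributed on the
   (distinct) points listed in pts. *)
Definition unif_expect_h (d : S1 -> S1 -> R) (pts : list S1) (mu : S1) : R :=
  / (INR (length pts) ^ 2) * lsum (fun a => lsum (fun b => h_ker d a b mu) pts) pts.

Definition metric_spatial_depth (d : S1 -> S1 -> R) (pts : list S1) (mu : S1) : R :=
  1 - / 2 * unif_expect_h d pts mu.

(* The j-th of 2k equally spaced points on S^1: angle j * (2π / 2k) = π j / k. *)
Definition circ_pt (k j : nat) : S1 :=
  (cos (PI * INR j / INR k), sin (PI * INR j / INR k)).

Definition P2k_pts (k : nat) : list S1 := map (circ_pt k) (seq 0 (2 * k)).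

From Stdlib Require Import Reals Lra Lia List.
Open Scope R_scope.

(* Write k = n + 1.  The arc distance between the grid points a and b only
   depends on the index difference a - b: it is PI |a - b| / k after reducing
   a - b modulo 2k into [-k, k] ([grid_dist]).  Hence h(X1, X2, mu) becomes a
   function [grid_h] of the two index offsets of X1, X2 seen from mu, and
   rotation invariance ([grid_total_rotation]) lets us place mu at index n, so
   that the other points have offsets -1, ..., -n on one side and 1, ..., k on
   the other ([lsum_offsets]).  Pairs on the same side give h = 2, pairs at
   offsets p and -w give -2 + 4k (p + w - k)_+ / (pw), and pairs involving mu
   give 0.  The double sum therefore equals 2 + 8k C, where C is a sum of
   (p + w - k)_+ / (pw); the harmonic identities of the second section evaluate
   C = 2k - 1 - k H2(k) via the classical identity
   sum_{p,q <= k, p + q > k} 1/(pq) = H2(k).  The theorem is then a field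
   computation. *)

(** * Finite sums over lists *)

Lemma lsum_app {A} (f : A -> R) (l1 l2 : list A) :
  lsum f (l1 ++ l2) = lsum f l1 + lsum f l2.
Proof. induction l1 as [|x l1 IH]; simpl; [ring | rewrite IH; ring]. Qed.

Lemma lsum_ext_in {A} (f g : A -> R) (l : list A) :
  (forall x, In x l -> f x = g x) -> lsum f l = lsum g l.
Proof.
  induction l as [|x l IH]; simpl; intros Hfg; [reflexivity|].
  rewrite Hfg, IH by auto. reflexivity.
Qed.

Lemma lsum_ext {A} (f g : A -> R) (l : list A) :
  (forall x, f x = g x) -> lsum f l = lsum g l.
Proof. intros Hfg; apply lsum_ext_in; auto. Qed.

Lemma lsum_plus {A} (f g : A -> R) (l : list A) :
  lsum (fun x => f x + g x) l = lsum f l + lsum g l.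
Proof. induction l as [|x l IH]; simpl; [ring | rewrite IH; ring]. Qed.

Lemma lsum_minus {A} (f g : A -> R) (l : list A) :
  lsum (fun x => f x - g x) l = lsum f l - lsum g l.
Proof. induction l as [|x l IH]; simpl; [ring | rewrite IH; ring]. Qed.

Lemma lsum_scal {A} (c : R) (f : A -> R) (l : list A) :
  lsum (fun x => c * f x) l = c * lsum f l.
Proof. induction l as [|x l IH]; simpl; [ring | rewrite IH; ring]. Qed.

Lemma lsum_const {A} (c : R) (l : list A) : lsum (fun _ => c) l = INR (length l) * c.
Proof.
  induction l as [|x l IH]; [simpl; ring|].
  cbn [length lsum fold_right] in *. rewrite S_INR. unfold lsum in IH. rewrite IH. ring.
Qed.

Lemma lsum_map {A B} (f : B -> R) (g : A -> B) (l : list A) :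
  lsum f (map g l) = lsum (fun x => f (g x)) l.
Proof. induction l as [|x l IH]; simpl; [reflexivity | rewrite IH; reflexivity]. Qed.

Lemma lsum_swap {A B} (f : A -> B -> R) (l1 : list A) (l2 : list B) :
  lsum (fun a => lsum (fun b => f a b) l2) l1 = lsum (fun b => lsum (fun a => f a b) l1) l2.
Proof.
  induction l1 as [|a l1 IH]; simpl.
  - induction l2 as [|b l2 IH2]; simpl; [reflexivity | rewrite <- IH2; ring].
  - rewrite IH, <- lsum_plus. reflexivity.
Qed.

Lemma lsum_seq_shift (f : nat -> R) (s m n : nat) :
  lsum f (seq (s + m) n) = lsum (fun x => f (x + m)%nat) (seq s n).
Proof.
  revert s; induction n as [|n IH]; intros s; simpl; [reflexivity|].
  rewrite <- IH. reflexivity.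
Qed.

Lemma lsum_seq_last (f : nat -> R) (s n : nat) :
  lsum f (seq s (S n)) = lsum f (seq s n) + f (s + n)%nat.
Proof. rewrite seq_S, lsum_app; simpl; ring. Qed.

Lemma lsum_seq_rev (g : nat -> R) (n : nat) :
  lsum (fun b => g (n - b)%nat) (seq 0 n) = lsum g (seq 1 n).
Proof.
  revert g; induction n as [|n IH]; intros g; [reflexivity|].
  rewrite lsum_seq_last.
  replace (S n - (0 + n))%nat with 1%nat by lia.
  rewrite (lsum_ext_in _ (fun b => g (S (n - b)))).
  2:{ intros b Hb%in_seq. f_equal. lia. }
  rewrite (IH (fun b => g (S b))).
  change (seq 1 (S n)) with (1%nat :: seq 2 n).
  rewrite <- (seq_shift n 1). cbn [lsum fold_right]. fold (lsum g (map S (seq 1 n))).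
  rewrite lsum_map. ring.
Qed.

Lemma lsum_pick (f : nat -> R) (m s n : nat) :
  lsum (fun q => if (q =? m)%nat then f q else 0) (seq s n) =
  if andb (s <=? m)%nat (m <? s + n)%nat then f m else 0.
Proof.
  revert s; induction n as [|n IH]; intros s; simpl.
  - destruct (Nat.leb_spec s m), (Nat.ltb_spec m (s + 0)); simpl; lia || reflexivity.
  - rewrite IH. destruct (Nat.eqb_spec s m) as [<-|Hsm].
    + destruct (Nat.leb_spec (S s) s), (Nat.leb_spec s s), (Nat.ltb_spec s (s + S n));
        simpl; try lia; ring.
    + destruct (Nat.leb_spec (S s) m), (Nat.leb_spec s m), (Nat.ltb_spec m (S s + n)),
        (Nat.ltb_spec m (s + S n)); simpl; try lia; ring.
Qed.

Lemma INR_seq1_pos (p s n : nat) : (1 <= s)%nat -> In p (seq s n) -> 0 < INR p.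
Proof. intros Hs Hp%in_seq. apply lt_0_INR. lia. Qed.

(** * Harmonic-type identities *)

Definition ind (b : bool) : R := if b then 1 else 0.

Definition H1 (k : nat) : R := lsum (fun p => 1 / INR p) (seq 1 k).
Definition H2 (k : nat) : R := lsum (fun p => 1 / INR p ^ 2) (seq 1 k).

Lemma H1_S (k : nat) : H1 (S k) = H1 k + 1 / INR (S k).
Proof. unfold H1. rewrite lsum_seq_last. reflexivity. Qed.

Lemma H2_S (k : nat) : H2 (S k) = H2 k + 1 / INR (S k) ^ 2.
Proof. unfold H2. rewrite lsum_seq_last. reflexivity. Qed.

(* Partial fractions: sum over p of 1/(p (k+1-p)) is 2 H1(k) / (k+1). *)
Lemma lsum_recip_products (k : nat) :
  lsum (fun p => 1 / (INR p * INR (S k - p))) (seq 1 k) = 2 * H1 k / INR (S k).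
Proof.
  assert (Hk : 0 < INR (S k)) by (apply lt_0_INR; lia).
  rewrite (lsum_ext_in _ (fun p => / INR (S k) * (1 / INR p + 1 / INR (S k - p)))).
  - rewrite lsum_scal, lsum_plus.
    assert (Hrev : lsum (fun p => 1 / INR (S k - p)) (seq 1 k) = H1 k).
    { unfold H1. rewrite <- (lsum_seq_rev (fun p => 1 / INR p)), <- (seq_shift k 0), lsum_map.
      reflexivity. }
    rewrite Hrev. unfold H1. field. lra.
  - intros p Hp%in_seq. rewrite minus_INR by lia.
    assert (0 < INR p) by (apply lt_0_INR; lia).
    assert (INR p < INR (S k)) by (apply lt_INR; lia).
    field. lra.
Qed.

Definition pairs_above (k : nat) : R :=
  lsum (fun p => lsum (fun q => ind (k <? p + q)%nat / (INR p * INR q)) (seq 1 k)) (seq 1 k).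

Lemma pairs_above_row_S (k p : nat) : (1 <= p <= k)%nat ->
  lsum (fun q => ind (S k <? p + q)%nat / (INR p * INR q)) (seq 1 (S k)) =
  lsum (fun q => ind (k <? p + q)%nat / (INR p * INR q)) (seq 1 k)
  - 1 / (INR p * INR (S k - p)) + 1 / (INR p * INR (S k)).
Proof.
  intros Hp. rewrite lsum_seq_last.
  rewrite (lsum_ext_in _ (fun q => ind (k <? p + q)%nat / (INR p * INR q)
      - (if (q =? S k - p)%nat then 1 / (INR p * INR q) else 0))).
  - rewrite lsum_minus, lsum_pick.
    destruct (Nat.leb_spec 1 (S k - p)), (Nat.ltb_spec (S k - p) (1 + k)); try lia.
    unfold ind. destruct (Nat.ltb_spec (S k) (p + (1 + k))); [reflexivity | lia].
  - intros q Hq%in_seq. unfold ind.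
    destruct (Nat.eqb_spec q (S k - p)), (Nat.ltb_spec (S k) (p + q)),
      (Nat.ltb_spec k (p + q)); try lia; unfold Rdiv; ring.
Qed.

Lemma pairs_above_S (k : nat) : pairs_above (S k) = pairs_above k + 1 / INR (S k) ^ 2.
Proof.
  assert (Hk : 0 < INR (S k)) by (apply lt_0_INR; lia).
  unfold pairs_above. rewrite lsum_seq_last.
  rewrite (lsum_ext_in _ (fun p =>
      lsum (fun q => ind (k <? p + q)%nat / (INR p * INR q)) (seq 1 k)
      - 1 / (INR p * INR (S k - p)) + 1 / (INR p * INR (S k)))).
  2:{ intros p Hp%in_seq. apply pairs_above_row_S. lia. }
  rewrite !lsum_plus, lsum_minus, lsum_recip_products.
  rewrite (lsum_ext (fun p => 1 / (INR p * INR (S k))) (fun p => / INR (S k) * (1 / INR p))).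
  2:{ intros p. unfold Rdiv. rewrite Rinv_mult. ring. }
  rewrite (lsum_ext_in (fun q => ind (S k <? 1 + k + q)%nat / (INR (1 + k) * INR q))
                       (fun q => / INR (S k) * (1 / INR q))).
  2:{ intros q Hq%in_seq. unfold ind. destruct (Nat.ltb_spec (S k) (1 + k + q)); [|lia].
      change (1 + k)%nat with (S k). unfold Rdiv. rewrite Rinv_mult. ring. }
  rewrite !lsum_scal. fold (H1 k) (H1 (S k)). rewrite H1_S. field. lra.
Qed.

Lemma pairs_above_H2 (k : nat) : pairs_above k = H2 k.
Proof.
  induction k as [|k IH]; [reflexivity|].
  rewrite pairs_above_S, H2_S, IH. reflexivity.
Qed.

Lemma count_above (k q : nat) : (q <= k)%nat ->
  lsum (fun p => ind (k <? p + q)%nat) (seq 1 k) = INR q.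
Proof.
  intros Hq.
  assert (Hsplit : seq 1 k = seq 1 (k - q) ++ seq (1 + (k - q)) q)
    by (rewrite <- seq_app; f_equal; lia).
  rewrite Hsplit, lsum_app, (lsum_ext_in _ (fun _ => 0) (seq 1 (k - q))),
    (lsum_ext_in _ (fun _ => 1) (seq (1 + (k - q)) q)).
  - rewrite !lsum_const, !length_seq. ring.
  - intros p Hp%in_seq. unfold ind. destruct (Nat.ltb_spec k (p + q)); [reflexivity | lia].
  - intros p Hp%in_seq. unfold ind. destruct (Nat.ltb_spec k (p + q)); [lia | reflexivity].
Qed.

Definition pairs_excess (k : nat) : R :=
  lsum (fun p => lsum (fun q => INR (p + q - k) / (INR p * INR q)) (seq 1 k)) (seq 1 k).

Lemma excess_split (k p q : nat) : (1 <= p)%nat -> (1 <= q)%nat ->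
  INR (p + q - k) / (INR p * INR q) =
  / INR q * ind (k <? p + q)%nat + / INR p * ind (k <? q + p)%nat
  - INR k * (ind (k <? p + q)%nat / (INR p * INR q)).
Proof.
  intros Hp Hq.
  assert (0 < INR p) by (apply lt_0_INR; lia). assert (0 < INR q) by (apply lt_0_INR; lia).
  rewrite Nat.add_comm with (n := q). unfold ind.
  destruct (Nat.ltb_spec k (p + q)).
  - rewrite minus_INR, plus_INR by lia. field. lra.
  - replace (p + q - k)%nat with 0%nat by lia. simpl. field. lra.
Qed.

(* By symmetry and [count_above], U(k) = 2k - k V(k). *)
Lemma pairs_excess_eq (k : nat) : pairs_excess k = 2 * INR k - INR k * pairs_above k.
Proof.
  unfold pairs_excess, pairs_above.
  rewrite (lsum_ext_in _ (fun p =>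
      lsum (fun q => / INR q * ind (k <? p + q)%nat) (seq 1 k) + 1
      - INR k * lsum (fun q => ind (k <? p + q)%nat / (INR p * INR q)) (seq 1 k))).
  - rewrite lsum_minus, lsum_plus, lsum_swap, lsum_scal, lsum_const, length_seq.
    rewrite (lsum_ext_in _ (fun _ => 1)).
    + rewrite lsum_const, length_seq. ring.
    + intros q Hq. assert (0 < INR q) by (eapply INR_seq1_pos; eauto).
      apply in_seq in Hq. rewrite lsum_scal, count_above by lia. field. lra.
  - intros p Hp. assert (0 < INR p) by (eapply INR_seq1_pos; eauto). apply in_seq in Hp.
    rewrite (lsum_ext_in _ (fun q =>
        / INR q * ind (k <? p + q)%nat + / INR p * ind (k <? q + p)%nat
        - INR k * (ind (k <? p + q)%nat / (INR p * INR q)))).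
    2:{ intros q Hq%in_seq. apply excess_split; lia. }
    rewrite lsum_minus, lsum_plus, !lsum_scal, count_above by lia. field. lra.
Qed.

(* The same sum with q restricted to [1..n] and k = n + 1: the column q = k
   contributes exactly 1. *)
Definition cross_excess (n : nat) : R :=
  lsum (fun p => lsum (fun w => INR (p + w - S n) / (INR p * INR w)) (seq 1 n)) (seq 1 (S n)).

Lemma cross_excess_eq (n : nat) :
  cross_excess n = 2 * INR (S n) - 1 - INR (S n) * H2 (S n).
Proof.
  assert (Hn : 0 < INR (S n)) by (apply lt_0_INR; lia).
  assert (Hcol : pairs_excess (S n) = cross_excess n + 1).
  { unfold pairs_excess, cross_excess.
    rewrite (lsum_ext_in _ (fun p =>
      lsum (fun w => INR (p + w - S n) / (INR p * INR w)) (seq 1 n) + / INR (S n))).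
    - rewrite lsum_plus, lsum_const, length_seq. field. lra.
    - intros p Hp. assert (0 < INR p) by (eapply INR_seq1_pos; eauto).
      rewrite lsum_seq_last. replace (p + (1 + n) - S n)%nat with p by lia.
      change (1 + n)%nat with (S n). f_equal. field. lra. }
  rewrite pairs_excess_eq, pairs_above_H2 in Hcol. lra.
Qed.

(** * Geometry of the 2k equally spaced points *)

Definition grid_dist (k : nat) (x : R) : R := acos (cos (PI * x / INR k)).

Lemma arc_dist_circ_pt (k a b : nat) :
  arc_dist (circ_pt k a) (circ_pt k b) = grid_dist k (INR a - INR b).
Proof.
  unfold arc_dist, circ_pt, grid_dist; simpl. rewrite <- cos_minus.
  f_equal. f_equal. unfold Rdiv. ring.
Qed.

Lemma grid_dist_opp (k : nat) (x : R) : grid_dist k (- x) = grid_dist k x.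
Proof.
  unfold grid_dist. replace (PI * - x / INR k) with (- (PI * x / INR k)) by (unfold Rdiv; ring).
  rewrite cos_neg. reflexivity.
Qed.

Lemma grid_dist_period (k : nat) (x : R) : (0 < k)%nat ->
  grid_dist k (x + INR (2 * k)) = grid_dist k x.
Proof.
  intros Hk. unfold grid_dist.
  replace (PI * (x + INR (2 * k)) / INR k) with (PI * x / INR k + 2 * INR 1 * PI).
  - rewrite cos_period. reflexivity.
  - rewrite mult_INR. simpl. field. apply not_0_INR. lia.
Qed.

Lemma grid_dist_near (k : nat) (x : R) : (0 < k)%nat -> 0 <= x <= INR k ->
  grid_dist k x = PI * x / INR k.
Proof.
  intros Hk Hx. assert (0 < INR k) by (apply lt_0_INR; lia). pose proof PI_RGT_0.
  unfold grid_dist. apply acos_cos. split.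
  - apply Rmult_le_pos; [nra | left; apply Rinv_0_lt_compat; lra].
  - apply Rmult_le_reg_r with (INR k); [lra|]. unfold Rdiv.
    rewrite Rmult_assoc, Rinv_l by lra. nra.
Qed.

(* On [k, 2k] one goes around the other way. *)
Lemma grid_dist_far (k : nat) (x : R) : (0 < k)%nat -> INR k <= x <= 2 * INR k ->
  grid_dist k x = PI * (2 * INR k - x) / INR k.
Proof.
  intros Hk Hx. rewrite <- grid_dist_opp, <- (grid_dist_period k (- x)) by exact Hk.
  replace (- x + INR (2 * k)) with (2 * INR k - x) by (rewrite mult_INR; simpl; ring).
  apply grid_dist_near; [exact Hk | lra].
Qed.

Lemma grid_dist_sq (k : nat) (z : R) : (0 < k)%nat -> - INR k <= z <= INR k ->
  grid_dist k z ^ 2 = (PI / INR k) ^ 2 * z ^ 2.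
Proof.
  intros Hk Hz. destruct (Rle_dec 0 z).
  - rewrite grid_dist_near by (auto; lra). unfold Rdiv; ring.
  - rewrite <- grid_dist_opp, grid_dist_near by (auto; lra). unfold Rdiv; ring.
Qed.

Lemma grid_dist_pos (k : nat) (x : R) : (0 < k)%nat -> 0 < x <= INR k -> grid_dist k x <> 0.
Proof.
  intros Hk Hx. assert (0 < INR k) by (apply lt_0_INR; lia). pose proof PI_RGT_0.
  rewrite grid_dist_near by (auto; lra). apply Rgt_not_eq.
  unfold Rdiv. apply Rmult_gt_0_compat; [nra | apply Rinv_0_lt_compat; lra].
Qed.

Lemma circ_pt_eq_iff (k a b : nat) :
  circ_pt k a = circ_pt k b <-> grid_dist k (INR a - INR b) = 0.
Proof.
  rewrite <- arc_dist_circ_pt. unfold arc_dist, circ_pt; simpl.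
  set (u := PI * INR a / INR k). set (v := PI * INR b / INR k).
  pose proof (sin2_cos2 u) as Hu. pose proof (sin2_cos2 v) as Hv. unfold Rsqr in *.
  split.
  - intros [= Hc Hs]. rewrite Hc, Hs.
    replace (cos v * cos v + sin v * sin v) with 1 by lra. apply acos_1.
  - intros H0. rewrite <- cos_minus in H0.
    assert (Hcos : cos (u - v) = 1).
    { rewrite <- (cos_acos (cos (u - v))) by apply COS_bound. rewrite H0. apply cos_0. }
    rewrite cos_minus in Hcos.
    assert (Hsq : (cos u - cos v) * (cos u - cos v) + (sin u - sin v) * (sin u - sin v) = 0)
      by nra.
    apply Rplus_sqr_eq_0 in Hsq. unfold Rsqr in Hsq. f_equal; nra.
Qed.

(** * The kernel h on the grid, in terms of index offsets *)

Definition grid_h (k : nat) (x y : R) : R :=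
  if Req_dec_T (grid_dist k x) 0 then 0
  else if Req_dec_T (grid_dist k y) 0 then 0
  else (grid_dist k x ^ 2 + grid_dist k y ^ 2 - grid_dist k (x - y) ^ 2)
       / (grid_dist k x * grid_dist k y).

Lemma h_ker_circ_pt (k a b j : nat) :
  h_ker arc_dist (circ_pt k a) (circ_pt k b) (circ_pt k j) =
  grid_h k (INR a - INR j) (INR b - INR j).
Proof.
  unfold h_ker, grid_h. rewrite !arc_dist_circ_pt.
  replace (INR a - INR b) with ((INR a - INR j) - (INR b - INR j)) by ring.
  assert (Hsame : forall c, circ_pt k j = circ_pt k c <-> grid_dist k (INR c - INR j) = 0).
  { intros c. rewrite circ_pt_eq_iff, <- grid_dist_opp.
    replace (- (INR j - INR c)) with (INR c - INR j) by ring. reflexivity. }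
  destruct (S1_eq_dec (circ_pt k j) (circ_pt k a)) as [Ea|Ea]; rewrite Hsame in Ea;
    destruct (Req_dec_T (grid_dist k (INR a - INR j)) 0); try tauto.
  destruct (S1_eq_dec (circ_pt k j) (circ_pt k b)) as [Eb|Eb]; rewrite Hsame in Eb;
    destruct (Req_dec_T (grid_dist k (INR b - INR j)) 0); tauto.
Qed.

Lemma grid_h_sym (k : nat) (x y : R) : grid_h k x y = grid_h k y x.
Proof.
  unfold grid_h. replace (y - x) with (- (x - y)) by ring. rewrite grid_dist_opp.
  destruct (Req_dec_T (grid_dist k x) 0), (Req_dec_T (grid_dist k y) 0); try reflexivity.
  f_equal; ring.
Qed.

Lemma grid_h_opp (k : nat) (x y : R) : grid_h k (- x) (- y) = grid_h k x y.
Proof.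
  unfold grid_h. replace (- x - - y) with (- (x - y)) by ring.
  rewrite !grid_dist_opp. reflexivity.
Qed.

Lemma grid_h_period (k : nat) (x y : R) : (0 < k)%nat ->
  grid_h k (x + INR (2 * k)) y = grid_h k x y.
Proof.
  intros Hk. unfold grid_h.
  replace (x + INR (2 * k) - y) with ((x - y) + INR (2 * k)) by ring.
  rewrite !grid_dist_period by exact Hk. reflexivity.
Qed.

Lemma grid_h_zero (k : nat) (y : R) : (0 < k)%nat -> grid_h k 0 y = 0.
Proof.
  intros Hk. pose proof (pos_INR k). unfold grid_h. rewrite grid_dist_near by (auto; lra).
  destruct (Req_dec_T (PI * 0 / INR k) 0) as [|Hne]; [reflexivity|].
  exfalso. apply Hne. unfold Rdiv. ring.
Qed.

(* X1 and X2 on the same side of mu: the distances add up along one arc, h = 2. *)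
Lemma grid_h_same_side (k : nat) (x y : R) : (0 < k)%nat ->
  0 < x <= INR k -> 0 < y <= INR k -> grid_h k x y = 2.
Proof.
  intros Hk Hx Hy. assert (0 < INR k) by (apply lt_0_INR; lia). pose proof PI_RGT_0.
  unfold grid_h.
  destruct (Req_dec_T (grid_dist k x) 0) as [E|_]; [exfalso; exact (grid_dist_pos k x Hk Hx E)|].
  destruct (Req_dec_T (grid_dist k y) 0) as [E|_]; [exfalso; exact (grid_dist_pos k y Hk Hy E)|].
  rewrite (grid_dist_sq k (x - y)), (grid_dist_near k x), (grid_dist_near k y) by (auto; lra).
  field. repeat split; lra.
Qed.

Definition opposite_value (k p w : nat) : R :=
  -2 + 4 * INR k * INR (p + w - k) / (INR p * INR w).

Lemma grid_h_opposite (k p w : nat) : (0 < k)%nat -> (1 <= p <= k)%nat -> (1 <= w <= k)%nat ->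
  grid_h k (INR p) (- INR w) = opposite_value k p w.
Proof.
  intros Hk Hp Hw. assert (0 < INR k) by (apply lt_0_INR; lia). pose proof PI_RGT_0.
  assert (1 <= INR p <= INR k) by (split; [apply (le_INR 1) | apply le_INR]; lia).
  assert (1 <= INR w <= INR k) by (split; [apply (le_INR 1) | apply le_INR]; lia).
  unfold grid_h, opposite_value. rewrite grid_dist_opp.
  destruct (Req_dec_T (grid_dist k (INR p)) 0) as [E|_].
  { exfalso. refine (grid_dist_pos k (INR p) Hk _ E). lra. }
  destruct (Req_dec_T (grid_dist k (INR w)) 0) as [E|_].
  { exfalso. refine (grid_dist_pos k (INR w) Hk _ E). lra. }
  rewrite (grid_dist_near k (INR p)), (grid_dist_near k (INR w)) by (auto; lra).
  replace (INR p - - INR w) with (INR (p + w)) by (rewrite plus_INR; ring).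
  destruct (Nat.le_gt_cases (p + w) k).
  - assert (INR (p + w) <= INR k) by (apply le_INR; lia).
    pose proof (pos_INR (p + w)). rewrite grid_dist_near by (auto; lra).
    replace (p + w - k)%nat with 0%nat by lia. rewrite plus_INR. simpl.
    field. repeat split; lra.
  - assert (INR k <= INR (p + w)) by (apply le_INR; lia).
    rewrite grid_dist_far by (auto; rewrite plus_INR in *; lra).
    rewrite minus_INR by lia. rewrite !plus_INR. field. repeat split; lra.
Qed.

(** * Rotation invariance *)

Lemma lsum_periodic_step (g : R -> R) (K : nat) (c : R) :
  (forall x, g (x + INR K) = g x) ->
  lsum (fun a => g (INR a + c)) (seq 0 K) = lsum (fun a => g (INR a + c + 1)) (seq 0 K).
Proof.
  intros Hg. destruct K as [|K]; [reflexivity|].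
  change (seq 0 (S K)) with (0%nat :: seq 1 K) at 1. cbn [lsum fold_right].
  fold (lsum (fun a => g (INR a + c)) (seq 1 K)).
  rewrite lsum_seq_last, <- (seq_shift K 0), lsum_map.
  rewrite (lsum_ext (fun a => g (INR (S a) + c)) (fun a => g (INR a + c + 1)))
    by (intros a; rewrite S_INR; f_equal; ring).
  rewrite <- (Hg (INR 0 + c)). replace (INR 0 + c + INR (S K)) with (INR (0 + K) + c + 1)
    by (rewrite S_INR; simpl; ring).
  ring.
Qed.

Lemma lsum_periodic_recenter (g : R -> R) (K j m : nat) :
  (forall x, g (x + INR K) = g x) ->
  lsum (fun a => g (INR a - INR j)) (seq 0 K) = lsum (fun a => g (INR a - INR m)) (seq 0 K).
Proof.
  intros Hg.
  assert (Hcenter : forall i,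
      lsum (fun a => g (INR a - INR i)) (seq 0 K) = lsum (fun a => g (INR a)) (seq 0 K)).
  { induction i as [|i IH].
    - apply lsum_ext. intros a. f_equal. simpl. ring.
    - rewrite <- IH, (lsum_ext _ (fun a => g (INR a + - INR (S i))))
        by (intros a; f_equal; ring).
      rewrite lsum_periodic_step by exact Hg.
      apply lsum_ext. intros a. f_equal. rewrite S_INR. ring. }
  rewrite !Hcenter. reflexivity.
Qed.

Definition grid_total (k j : nat) : R :=
  lsum (fun a => lsum (fun b => grid_h k (INR a - INR j) (INR b - INR j)) (seq 0 (2 * k)))
       (seq 0 (2 * k)).

Lemma depth_sum_on_grid (k j : nat) :
  lsum (fun a => lsum (fun b => h_ker arc_dist a b (circ_pt k j)) (P2k_pts k)) (P2k_pts k)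
  = grid_total k j.
Proof.
  unfold P2k_pts, grid_total. rewrite lsum_map. apply lsum_ext. intros a.
  rewrite lsum_map. apply lsum_ext. intros b. apply h_ker_circ_pt.
Qed.

Lemma grid_total_rotation (k j m : nat) : (0 < k)%nat -> grid_total k j = grid_total k m.
Proof.
  intros Hk. unfold grid_total.
  rewrite (lsum_ext _ (fun a =>
      lsum (fun b => grid_h k (INR a - INR j) (INR b - INR m)) (seq 0 (2 * k)))).
  - apply (lsum_periodic_recenter
      (fun x => lsum (fun b => grid_h k x (INR b - INR m)) (seq 0 (2 * k)))).
    intros x. apply lsum_ext. intros b. apply grid_h_period, Hk.
  - intros a. apply (lsum_periodic_recenter (fun y => grid_h k (INR a - INR j) y)).
    intros y. rewrite grid_h_sym, grid_h_period, grid_h_sym by exact Hk. reflexivity.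
Qed.

(** * Evaluation of the total at the point of index n, with k = n + 1 *)

Lemma lsum_offsets (g : R -> R) (n : nat) :
  lsum (fun a => g (INR a - INR n)) (seq 0 (2 * S n)) =
  lsum (fun w => g (- INR w)) (seq 1 n) + g 0 + lsum (fun p => g (INR p)) (seq 1 (S n)).
Proof.
  replace (2 * S n)%nat with (n + (1 + S n))%nat by lia.
  rewrite !seq_app, !lsum_app. simpl (seq (0 + n) 1). rewrite Nat.add_0_l.
  rewrite <- (lsum_seq_rev (fun w => g (- INR w))).
  replace (n + 1)%nat with (1 + n)%nat by lia. rewrite (lsum_seq_shift _ 1 n).
  cbn [lsum fold_right] in *. rewrite Rminus_diag, Rplus_0_r.
  rewrite (lsum_ext_in (fun a => g (INR a - INR n)) (fun b => g (- INR (n - b)))).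
  2:{ intros a Ha%in_seq. rewrite minus_INR by lia. f_equal. ring. }
  rewrite (lsum_ext (fun x => g (INR (x + n) - INR n)) (fun p => g (INR p)))
    by (intros p; rewrite plus_INR; f_equal; ring).
  ring.
Qed.

Section OffsetSums.
Variable n : nat.

Lemma row_negative (w : nat) : (1 <= w <= n)%nat ->
  lsum (fun b => grid_h (S n) (- INR w) (INR b - INR n)) (seq 0 (2 * S n)) =
  2 * INR n + lsum (fun p => opposite_value (S n) p w) (seq 1 (S n)).
Proof.
  intros Hw. assert (INR w <= INR n) by (apply le_INR; lia).
  rewrite (lsum_offsets (fun y => grid_h (S n) (- INR w) y)), grid_h_sym, grid_h_zero by lia.
  rewrite (lsum_ext_in (fun v => grid_h (S n) (- INR w) (- INR v)) (fun _ => 2)),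
    (lsum_ext_in (fun p => grid_h (S n) (- INR w) (INR p)) (fun p => opposite_value (S n) p w)).
  - rewrite lsum_const, length_seq. ring.
  - intros p Hp%in_seq. rewrite grid_h_sym. apply grid_h_opposite; lia.
  - intros v Hv%in_seq. rewrite grid_h_opp.
    assert (INR v <= INR n) by (apply le_INR; lia). assert (1 <= INR v) by (apply (le_INR 1); lia).
    assert (1 <= INR w) by (apply (le_INR 1); lia).
    apply grid_h_same_side; [lia | rewrite S_INR; lra ..].
Qed.

Lemma row_center :
  lsum (fun b => grid_h (S n) 0 (INR b - INR n)) (seq 0 (2 * S n)) = 0.
Proof.
  rewrite (lsum_ext _ (fun _ => 0)) by (intros b; apply grid_h_zero; lia).
  rewrite lsum_const. ring.
Qed.

Lemma row_positive (p : nat) : (1 <= p <= S n)%nat ->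
  lsum (fun b => grid_h (S n) (INR p) (INR b - INR n)) (seq 0 (2 * S n)) =
  lsum (fun w => opposite_value (S n) p w) (seq 1 n) + 2 * INR (S n).
Proof.
  intros Hp. assert (INR p <= INR (S n)) by (apply le_INR; lia).
  assert (1 <= INR p) by (apply (le_INR 1); lia).
  rewrite (lsum_offsets (fun y => grid_h (S n) (INR p) y)), grid_h_sym, grid_h_zero by lia.
  rewrite (lsum_ext_in (fun w => grid_h (S n) (INR p) (- INR w))
                       (fun w => opposite_value (S n) p w)),
    (lsum_ext_in (fun v => grid_h (S n) (INR p) (INR v)) (fun _ => 2)).
  - rewrite lsum_const, length_seq. ring.
  - intros v Hv%in_seq.
    assert (INR v <= INR (S n)) by (apply le_INR; lia).
    assert (1 <= INR v) by (apply (le_INR 1); lia).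
    apply grid_h_same_side; [lia | lra ..].
  - intros w Hw%in_seq. apply grid_h_opposite; lia.
Qed.

Lemma cross_sum :
  lsum (fun p => lsum (fun w => opposite_value (S n) p w) (seq 1 n)) (seq 1 (S n)) =
  - 2 * INR (S n) * INR n + 4 * INR (S n) * cross_excess n.
Proof.
  unfold opposite_value, cross_excess.
  rewrite (lsum_ext _ (fun p => INR n * -2 + 4 * INR (S n) *
     lsum (fun w => INR (p + w - S n) / (INR p * INR w)) (seq 1 n))).
  - rewrite lsum_plus, lsum_const, lsum_scal, length_seq. ring.
  - intros p. rewrite lsum_plus, lsum_const, length_seq, <- lsum_scal. f_equal.
    apply lsum_ext. intros w. unfold Rdiv. ring.
Qed.

(* Same-side pairs give 2 each, opposite-side pairs give [opposite_value]. *)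
Lemma grid_total_center : grid_total (S n) n = 2 + 8 * INR (S n) * cross_excess n.
Proof.
  unfold grid_total.
  rewrite (lsum_offsets
      (fun x => lsum (fun b => grid_h (S n) x (INR b - INR n)) (seq 0 (2 * S n)))).
  rewrite row_center.
  rewrite (lsum_ext_in
      (fun w => lsum (fun b => grid_h (S n) (- INR w) (INR b - INR n)) (seq 0 (2 * S n)))
      (fun w => 2 * INR n + lsum (fun p => opposite_value (S n) p w) (seq 1 (S n))))
    by (intros w Hw%in_seq; apply row_negative; lia).
  rewrite (lsum_ext_in
      (fun p => lsum (fun b => grid_h (S n) (INR p) (INR b - INR n)) (seq 0 (2 * S n)))
      (fun p => lsum (fun w => opposite_value (S n) p w) (seq 1 n) + 2 * INR (S n)))
    by (intros p Hp%in_seq; apply row_positive; lia).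
  rewrite !lsum_plus, !lsum_const, !length_seq, lsum_swap, cross_sum, S_INR.
  ring.
Qed.

End OffsetSums.

Lemma H2_sum_f_R0 (n : nat) : sum_f_R0 (fun i => 1 / INR (i + 1) ^ 2) n = H2 (S n).
Proof.
  induction n as [|n IH].
  - unfold H2. simpl. ring.
  - rewrite tech5, IH, (H2_S (S n)), Nat.add_1_r. reflexivity.
Qed.

Theorem mainTheorem13 (k : nat) (hk : (1 <= k)%nat) (j : nat) (hj : (j < 2 * k)%nat) :
  metric_spatial_depth arc_dist (P2k_pts k) (circ_pt k j)
  = -1 + 1 / INR k - 1 / (4 * INR k ^ 2)
    + sum_f_R0 (fun i => 1 / INR (i + 1) ^ 2) (k - 1).
Proof.
  destruct k as [|n]; [lia|].
  unfold metric_spatial_depth, unif_expect_h.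
  rewrite depth_sum_on_grid, (grid_total_rotation (S n) j n), grid_total_center,
    cross_excess_eq by lia.
  unfold P2k_pts. rewrite length_map, length_seq, mult_INR.
  replace (S n - 1)%nat with n by lia. rewrite H2_sum_f_R0.
  assert (0 < INR (S n)) by (apply lt_0_INR; lia).
  simpl (INR 2). field. lra.
Qed.
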